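(* Let $p$ be an odd prime and $M$ the sub-add move matrix, with $t$, $k$, $i$ as in the context. (a) If $t$ is even, then $\Gamma_{M,\,p}$ has no secondary cycles. (b) If $t\equiv1\pmod 4$ and $(1+i)^t=i$, then all secondary cycles have length $t$. (c) If $t\equiv3\pmod4$ and $(1+i)^t=i$, then all secondary cycles have length $2t$. (d) If $t\equiv1\pmod4$ and $(1+i)^t=-i$, then all secondary cycles have length $2t$. (e) If $t\equiv3\pmod4$ and $(1+i)^t=-i$, then all secondary cycles have length $t$.
   Context: The sub-add move matrix is $M=\begin{pmatrix}1&-1\\1&1\end{pmatrix}$. $\Gamma_{M,\,p}$ is the directed graph with vertex set $\mathbb Z_p^2$ and arcs $((a,b),(a-b,a+b))$ (mod $p$; loops allowed). A directed cycle is a cycle in the underlying undirected graph such that in the induced directed subgraph every vertex has in- and out-degree $1$; a loop is a directed $1$-cycle. Let $t$ be the multiplicative order of $-4$ in $GF(p)$ and $k=4t$ (the $\mathbb Z_p$-order of $M$). Let $i\in GF(p^2)$ with $i^2=-1$, chosen so that ${\rm ord}(1-i)\le{\rm ord}(1+i)$ (multiplicative orders). A primary cycle is a directed cycle of length $k$; a secondary cycle is a directed cycle that is neither primary nor a $1$-cycle. *)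

From HB Require Import structures.
From mathcomp Require Import all_boot all_order all_algebra all_fingroup all_field.
Set Implicit Arguments. Unset Strict Implicit. Unset Printing Implicit Defensive.
Import GRing.Theory.
Local Open Scope ring_scope.

(* Multiplicative order of an element of a finite field (the group order of
   x in the unit group {unit F}; meaningful for x <> 0). *)
Definition mulord (F : finFieldType) (x : F) : nat :=
  #[insubd (1 : {unit F}) x]%g.

Definition subadd (p : nat) (v : 'F_p * 'F_p) : 'F_p * 'F_p :=
  (v.1 - v.2, v.1 + v.2).

(* A directed cycle of Gamma_{M,p}: a nonempty duplicate-free list
   [x_0; ...; x_{n-1}] with arcs x_j -> x_{j+1} and x_{n-1} -> x_0.
   Its length is the size of the list (a loop has length 1). *)
Definition dcycle (p : nat) (c : seq ('F_p * 'F_p)) : bool :=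
  [&& c != [::], uniq c & fcycle (@subadd p) c].

Definition tord (p : nat) : nat := mulord (-4 : 'F_p).

(* secondary cycle: neither primary (length k = 4t) nor a 1-cycle *)
Arguments dcycle : clear implicits.
Definition secondary (p : nat) (c : seq ('F_p * 'F_p)) : bool :=
  [&& dcycle p c, size c != 1%N & size c != (4 * tord p)%N].

Arguments secondary : clear implicits.

From HB Require Import structures.
From mathcomp Require Import all_boot all_order all_algebra all_fingroup all_field.
From mathcomp Require Import ring.
Set Implicit Arguments. Unset Strict Implicit. Unset Printing Implicit Defensive.
Import GRing.Theory.
Local Open Scope ring_scope.

(* Over GF(p^2) the matrix M is diagonalised by (a, b) |-> (a + b i, a - b i),
   with eigenvalues 1 + i and 1 - i.  Hence the orbit of v under the sub-add
   move has length ord(1 + i), ord(1 - i), their lcm, or 1, according to which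
   eigen-coordinates of v vanish.  Since (1 +- i)^4 = -4 has order t, both
   orders lie in {t, 2t, 4t}; the hypotheses on t and (1 + i)^t force
   ord(1 + i) = 4t (or both orders to be 4t when t is even), so a secondary
   cycle lives on the (1 - i)-eigenline, and (1 - i)^t = (-i)^t (1 + i)^t = +-1
   decides between t and 2t. *)

Lemma same_multiples_eqn (m n : nat) :
  (forall k, (m %| k) = (n %| k))%N -> m = n.
Proof. by move=> mn; apply/eqP; rewrite eqn_dvd mn dvdnn -mn dvdnn. Qed.

Lemma order_dvdn_iter (T : finType) (f : T -> T) (x : T) (k : nat) :
  injective f -> (fingraph.order f x %| k)%N = (iter k f x == x).
Proof.
move=> injf; have n_gt0 := fingraph.order_gt0 f x.
have iter_mul q : iter (q * fingraph.order f x) f x = x.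
  by elim: q => [|q IHq] //; rewrite mulSn iterD IHq iter_order.
rewrite {2}(divn_eq k (fingraph.order f x)) addnC iterD iter_mul /dvdn.
apply/eqP/eqP => [-> //|fix_x].
by rewrite -(findex_iter (ltn_pmod k n_gt0)) fix_x findex0.
Qed.

Lemma size_cycle_dvdn (T : finType) (f : T -> T) (x : T) (s : seq T) (k : nat) :
  injective f -> uniq (x :: s) -> fcycle f (x :: s) ->
  (size (x :: s) %| k)%N = (iter k f x == x).
Proof.
move=> injf uniq_xs cycle_xs.
by rewrite -(order_cycle cycle_xs uniq_xs (mem_head x s)) order_dvdn_iter.
Qed.

Lemma mulord0 (F : finFieldType) : mulord (0 : F) = 1%N.
Proof. by rewrite /mulord /insubd insubN ?unitr0 //= order1. Qed.

Section MultiplicativeOrder.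
Variable F : finFieldType.
Implicit Types x u : F.

Lemma mulord_dvdn x k : x != 0 -> (mulord x %| k)%N = (x ^+ k == 1).
Proof.
move=> x_neq0; rewrite /mulord cyclic.order_dvdn.
have ux : val (insubd (1%g : {unit F}) x) = x by rewrite insubdK // unitfE.
apply/eqP/eqP => [xk|xk]; first by rewrite -ux -FinRing.val_unitX xk.
by apply: val_inj; rewrite FinRing.val_unitX ux xk.
Qed.

Lemma mulord_gt0 x : (0 < mulord x)%N.
Proof. exact: order_gt0. Qed.

Lemma expr_mulord x : x != 0 -> x ^+ mulord x = 1.
Proof. by move=> x_neq0; apply/eqP; rewrite -mulord_dvdn. Qed.

Lemma mulr_fixed x u k :
  x != 0 -> (x ^+ k * u == u) = (u == 0) || (mulord x %| k)%N.
Proof.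
move=> x_neq0; rewrite mulord_dvdn // -subr_eq0 -{2}[u]mul1r -mulrBl.
by rewrite mulf_eq0 subr_eq0 orbC.
Qed.

End MultiplicativeOrder.

Lemma mulord_fmorph (F K : finFieldType) (f : {rmorphism F -> K}) x :
  mulord (f x) = mulord x.
Proof.
have [->|x_neq0] := eqVneq x 0; first by rewrite rmorph0 !mulord0.
apply: same_multiples_eqn => k.
by rewrite !mulord_dvdn ?fmorph_eq0 // -rmorphXn fmorph_eq1.
Qed.

Section FourthPower.
Variables (F : finFieldType) (x : F).
Hypothesis x_neq0 : x != 0.
Let t := mulord (x ^+ 4).
Let t_gt0 : (0 < t)%N. Proof. exact: mulord_gt0. Qed.

Lemma dvdn_mulord_X4 : (t %| mulord x)%N.
Proof.
by rewrite mulord_dvdn ?expf_neq0 // -exprM mulnC exprM expr_mulord ?expr1n.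
Qed.

Lemma mulord_dvdn_X4 : (mulord x %| 4 * t)%N.
Proof. by rewrite mulord_dvdn // exprM expr_mulord ?expf_neq0. Qed.

Lemma mulord_X4_cases :
  [\/ mulord x = t, mulord x = (2 * t)%N | mulord x = (4 * t)%N].
Proof.
have := mulord_dvdn_X4; have /dvdnP[q ->] := dvdn_mulord_X4.
rewrite dvdn_pmul2r // dvdn_divisors //.
by rewrite !inE => /or3P[] /eqP->; rewrite ?mul1n; constructor.
Qed.

Lemma mulord_X4_eq1 : x ^+ t = 1 -> mulord x = t.
Proof.
by move=> xt; apply/eqP; rewrite eqn_dvd dvdn_mulord_X4 mulord_dvdn // xt eqxx.
Qed.

Lemma mulord_X4_eq2 : x ^+ t != 1 -> x ^+ (2 * t) = 1 -> mulord x = (2 * t)%N.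
Proof.
move=> xt x2t; have ndvd_t : ~~ (mulord x %| t)%N by rewrite mulord_dvdn.
have dvd_2t : (mulord x %| 2 * t)%N by rewrite mulord_dvdn // x2t.
by case: mulord_X4_cases ndvd_t dvd_2t => -> //; rewrite ?dvdnn // dvdn_pmul2r.
Qed.

Lemma mulord_X4_eq4 : x ^+ (2 * t) != 1 -> mulord x = (4 * t)%N.
Proof.
move=> x2t; have ndvd_2t : ~~ (mulord x %| 2 * t)%N by rewrite mulord_dvdn.
by case: mulord_X4_cases ndvd_2t => -> //; rewrite ?dvdnn // dvdn_mull.
Qed.

Lemma mulord_X4_even : ~~ odd t -> mulord x = (4 * t)%N.
Proof.
move=> t_even; apply: mulord_X4_eq4.
have /dvdnP[h t_eq] : (2 %| t)%N by rewrite dvdn2.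
have h_gt0 : (0 < h)%N by move: t_gt0; rewrite t_eq muln_gt0 => /andP[].
have -> : (2 * t = 4 * h)%N by rewrite t_eq mulnCA mulnC.
rewrite exprM -mulord_dvdn ?expf_neq0 // -/t gtnNdvd // t_eq.
by rewrite -{1}[h]muln1 ltn_pmul2l.
Qed.

End FourthPower.

Section FpEmbedding.
Variables (p : nat) (F : fieldType) (chF : p \in [pchar F]).

Definition Fp_embed (a : 'F_p) : F := (a%:A : pPrimeCharType chF).

HB.instance Definition _ :=
  GRing.RMorphism.copy Fp_embed (in_alg (pPrimeCharType chF)).

End FpEmbedding.

Section SubAddEigenbasis.
Variables (p : nat) (F : finFieldType) (i : F).
Hypotheses (odd_p : odd p) (chF : p \in [pchar F]) (i2 : i ^+ 2 = -1).
Local Notation phi := (Fp_embed chF).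
Local Notation t := (tord p).

Let two_neq0 : (2 : F) != 0.
Proof.
rewrite -(dvdn_pcharf chF) dvdn_prime2 ?(pcharf_prime chF) //.
by apply: contraL odd_p => /eqP->.
Qed.

Let m1_neq1 : (-1 : F) != 1.
Proof. by rewrite -subr_eq0 -opprD oppr_eq0 -mulr2n. Qed.

Let i_neq0 : i != 0.
Proof.
have : i ^+ 2 != 0 by rewrite i2 oppr_eq0 oner_eq0.
by rewrite expf_eq0.
Qed.

Let one_pm_i_neq0 : (1 + i != 0) && (1 - i != 0).
Proof.
have : (1 + i) * (1 - i) != 0 by rewrite (_ : _ * _ = 2) //; ring: i2.
by rewrite mulf_eq0 negb_or.
Qed.

Let one_pi_neq0 : 1 + i != 0. Proof. by case/andP: one_pm_i_neq0. Qed.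
Let one_mi_neq0 : 1 - i != 0. Proof. by case/andP: one_pm_i_neq0. Qed.

Definition eigen_coords (v : 'F_p * 'F_p) : F * F :=
  (phi v.1 + phi v.2 * i, phi v.1 - phi v.2 * i).

Lemma eigen_coords_subadd v :
  eigen_coords (subadd v) =
  ((1 + i) * (eigen_coords v).1, (1 - i) * (eigen_coords v).2).
Proof. by rewrite /eigen_coords /= rmorphB rmorphD; congr pair; ring: i2. Qed.

Lemma eigen_coords_iter k v :
  eigen_coords (iter k (@subadd p) v) =
  ((1 + i) ^+ k * (eigen_coords v).1, (1 - i) ^+ k * (eigen_coords v).2).
Proof.
elim: k => [|k IHk]; first by rewrite !expr0 !mul1r -surjective_pairing.
by rewrite iterS eigen_coords_subadd IHk !exprS !mulrA.
Qed.

Lemma eigen_coords_inj : injective eigen_coords.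
Proof.
move=> [a b] [c d] [/= e1 e2].
have ea : phi a = phi c.
  apply: (mulfI two_neq0).
  transitivity ((phi a + phi b * i) + (phi a - phi b * i)); first by ring.
  by rewrite e1 e2; ring.
have eb : phi b = phi d.
  apply: (mulfI (mulf_neq0 two_neq0 i_neq0)).
  transitivity ((phi a + phi b * i) - (phi a - phi b * i)); first by ring.
  by rewrite e1 e2; ring.
by rewrite (fmorph_inj _ ea) (fmorph_inj _ eb).
Qed.

Lemma subadd_inj : injective (@subadd p).
Proof.
move=> v w /(congr1 eigen_coords); rewrite !eigen_coords_subadd => e.
apply: eigen_coords_inj; move: e.
case: (eigen_coords v) (eigen_coords w) => [u1 u2] [w1 w2] /= [].
by move=> /(mulfI one_pi_neq0)-> /(mulfI one_mi_neq0)->.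
Qed.

Lemma dcycle_size_dvdn c : dcycle p c ->
  exists u : F * F, forall k, (size c %| k)%N =
    ((u.1 == 0) || (mulord (1 + i)%R %| k)%N) &&
    ((u.2 == 0) || (mulord (1 - i)%R %| k)%N).
Proof.
case: c => [|v s] /and3P[//= _ uniq_c cycle_c].
exists (eigen_coords v) => k.
rewrite (size_cycle_dvdn _ subadd_inj uniq_c cycle_c) -(inj_eq eigen_coords_inj).
by rewrite eigen_coords_iter -!mulr_fixed.
Qed.

Lemma mulord_one_pm_i_X4 :
  mulord ((1 + i) ^+ 4) = t /\ mulord ((1 - i) ^+ 4) = t.
Proof.
have -> : (1 + i) ^+ 4 = -4 by ring: i2.
have -> : (1 - i) ^+ 4 = -4 by ring: i2.
by rewrite /tord -(mulord_fmorph phi) rmorphN rmorph_nat.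
Qed.

Lemma secondary_size c :
  mulord (1 + i) = (4 * t)%N -> secondary p c -> size c = mulord (1 - i).
Proof.
move=> ord_1pi /and3P[/dcycle_size_dvdn[u size_dvdn] size_neq1 size_neq4t].
have ord_1mi_dvdn : (mulord (1 - i)%R %| 4 * t)%N.
  by case: mulord_one_pm_i_X4 => _ <-; exact: mulord_dvdn_X4.
have size_dvdn_4t : (size c %| 4 * t)%N.
  by rewrite size_dvdn ord_1mi_dvdn -ord_1pi dvdnn !orbT.
have u1_eq0 : u.1 == 0.
  apply: contraNT size_neq4t => u1_neq0; rewrite eqn_dvd size_dvdn_4t.
  have := size_dvdn (size c); rewrite dvdnn (negbTE u1_neq0) ord_1pi orFb.
  by case/esym/andP=> ->.
have u2_neq0 : u.2 != 0.
  by apply: contra size_neq1 => u2_eq0; rewrite -dvdn1 size_dvdn u1_eq0 u2_eq0.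
by apply: same_multiples_eqn => k; rewrite size_dvdn u1_eq0 (negbTE u2_neq0).
Qed.

Lemma no_secondary_even c : ~~ odd t -> ~~ secondary p c.
Proof.
case: mulord_one_pm_i_X4 => ord_1pi_X4 ord_1mi_X4 t_even.
have ord_1pi : mulord (1 + i) = (4 * t)%N.
  by rewrite -ord_1pi_X4 mulord_X4_even ?ord_1pi_X4.
have ord_1mi : mulord (1 - i) = (4 * t)%N.
  by rewrite -ord_1mi_X4 mulord_X4_even ?ord_1mi_X4.
apply/negP => sec_c; move: (sec_c) => /and3P[_ _].
by rewrite (secondary_size ord_1pi sec_c) ord_1mi eqxx.
Qed.

Lemma expr_one_mi k : (1 - i) ^+ k = (-i) ^+ (k %% 4) * (1 + i) ^+ k.
Proof.
have -> : 1 - i = - i * (1 + i) by ring: i2.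
rewrite exprMn {1}(divn_eq k 4) exprD mulnC exprM.
have -> : (- i) ^+ 4 = 1 by ring: i2.
by rewrite expr1n mul1r.
Qed.

Lemma mulord_one_pi_eq4 :
  (1 + i) ^+ t = i \/ (1 + i) ^+ t = - i -> mulord (1 + i) = (4 * t)%N.
Proof.
case: mulord_one_pm_i_X4 => ord_1pi_X4 _ one_pi_t.
rewrite -ord_1pi_X4 mulord_X4_eq4 // ord_1pi_X4 mulnC exprM.
by case: one_pi_t => ->; rewrite ?sqrrN i2 m1_neq1.
Qed.

Lemma secondary_size_eq_t c :
  (1 + i) ^+ t = i \/ (1 + i) ^+ t = - i -> (1 - i) ^+ t = 1 ->
  secondary p c -> size c = t.
Proof.
move=> /mulord_one_pi_eq4 ord_1pi one_mi_t /(secondary_size ord_1pi)->.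
case: mulord_one_pm_i_X4 => _ ord_1mi_X4.
by rewrite -ord_1mi_X4 mulord_X4_eq1 // ord_1mi_X4.
Qed.

Lemma secondary_size_eq_2t c :
  (1 + i) ^+ t = i \/ (1 + i) ^+ t = - i -> (1 - i) ^+ t = -1 ->
  secondary p c -> size c = (2 * t)%N.
Proof.
move=> /mulord_one_pi_eq4 ord_1pi one_mi_t /(secondary_size ord_1pi)->.
case: mulord_one_pm_i_X4 => _ ord_1mi_X4.
rewrite -ord_1mi_X4 mulord_X4_eq2 // ord_1mi_X4 ?one_mi_t // mulnC exprM.
by rewrite one_mi_t sqrrN expr1n.
Qed.

End SubAddEigenbasis.

Theorem theorem7p2 (p : nat) (pr_p : prime p) (odd_p : odd p)
  (F : finFieldType) (cardF : #|F| = (p ^ 2)%N) (i : F)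
  (i2 : i ^+ 2 = -1) (iord : (mulord (1 - i)%R <= mulord (1 + i)%R)%N) :
  let t := tord p in
  [/\ (~~ odd t -> forall c, ~~ secondary p c),
      (t %% 4 = 1)%N -> (1 + i) ^+ t = i ->
        forall c, secondary p c -> size c = t,
      (t %% 4 = 3)%N -> (1 + i) ^+ t = i ->
        forall c, secondary p c -> size c = (2 * t)%N,
      (t %% 4 = 1)%N -> (1 + i) ^+ t = - i ->
        forall c, secondary p c -> size c = (2 * t)%N
    & (t %% 4 = 3)%N -> (1 + i) ^+ t = - i ->
        forall c, secondary p c -> size c = t].
Proof.
(* [iord] only normalises the choice of i; the argument works for both roots. *)
move=> t; have chF := card_finPcharP cardF pr_p.
have size_eq_t := secondary_size_eq_t odd_p chF i2.
have size_eq_2t := secondary_size_eq_2t odd_p chF i2.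
have one_mi_t := expr_one_mi i2 t.
split.
- by move=> t_even c; exact: (no_secondary_even odd_p chF i2).
- move=> t_mod4 one_pi_t c; apply: size_eq_t; first by left.
  by rewrite one_mi_t t_mod4 one_pi_t; ring: i2.
- move=> t_mod4 one_pi_t c; apply: size_eq_2t; first by left.
  by rewrite one_mi_t t_mod4 one_pi_t; ring: i2.
- move=> t_mod4 one_pi_t c; apply: size_eq_2t; first by right.
  by rewrite one_mi_t t_mod4 one_pi_t; ring: i2.
- move=> t_mod4 one_pi_t c; apply: size_eq_t; first by right.
  by rewrite one_mi_t t_mod4 one_pi_t; ring: i2.
Qed.
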